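(* Let $(S,* )$ be a finite indecomposable cycle set of size $n$ whose permutation group $\mathcal G$ is abelian. Then $n=|\mathcal G|$.
   Context: A cycle set is a set $S$ with a binary operation $*$ such that each $t\mapsto s*t$ is bijective and $(s*t)*(s*u)=(t*s)*(t*u)$ for all $s,t,u$. Write $S=\{s_1,\dots,s_n\}$, let $\psi(s)\in\mathfrak S_n$ satisfy $s_i*s_j=s_{\psi(s_i)(j)}$, and $\mathcal G=\langle\psi(s_1),\dots,\psi(s_n)\rangle\le\mathfrak S_n$. $S$ is decomposable if there is a partition $S=X\sqcup Y$ with $X,Y$ nonempty and $\psi(s)(X)\subseteq X$, $\psi(s)(Y)\subseteq Y$ for all $s\in S$; otherwise it is indecomposable. *)

From mathcomp Require Import all_boot all_order all_fingroup.
Set Implicit Arguments. Unset Strict Implicit. Unset Printing Implicit Defensive.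
Import GroupScope.

Definition left_bij (S : finType) (op : S -> S -> S) : Prop :=
  forall s, injective (op s).

Definition cycle_set (S : finType) (op : S -> S -> S) : Prop :=
  left_bij op /\ forall s t u, op (op s t) (op s u) = op (op t s) (op t u).

Definition psi (S : finType) (op : S -> S -> S) (H : left_bij op) (s : S)
  : {perm S} := perm (H s).

Definition psi_group (S : finType) (op : S -> S -> S) (H : left_bij op)
  : {group {perm S}} := <<[set psi H s | s : S]>>%G.

Definition decomposable (S : finType) (op : S -> S -> S) : Prop :=
  exists X : {set S}, X != set0 /\ ~: X != set0 /\
    (forall s x, x \in X -> op s x \in X) /\
    (forall s y, y \in ~: X -> op s y \in ~: X).

Definition indecomposable (S : finType) (op : S -> S -> S) : Prop :=
  ~ decomposable op.

From mathcomp Require Import all_boot all_order all_fingroup.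

(* Indecomposability says exactly that the group generated by the left
   translations acts transitively, since an orbit and its complement are
   invariant. A transitive abelian permutation group acts regularly: an element
   fixing one point commutes with elements moving that point anywhere, so it
   fixes every point. The orbit-stabilizer theorem then gives #|G| = #|S|. *)

Set Implicit Arguments.
Unset Strict Implicit.
Unset Printing Implicit Defensive.

Local Open Scope group_scope.

Section AbelianTransitive.

Variables (T : finType) (G : {group {perm T}}).
Hypotheses (cGG : abelian G) (trG : [transitive G, on [set: T] | 'P]).

Lemma abelian_transitive_astab1 x : 'C_G[x | 'P] = 1.
Proof.
apply/trivgP/subsetP => g /setIP[Gg /astab1P gx]; apply/set1P/permP => y.
have [a Ga ->] := atransP2 trG (in_setT x) (in_setT y).
have cga : commute g a := centsP cGG g Gg a Ga.
by rewrite perm1 -permM -cga permM [g x]gx.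
Qed.

Lemma card_abelian_transitive : #|G| = #|T|.
Proof.
have /imsetP[x _ orbitT] := trG.
rewrite -(card_orbit_stab 'P G x) abelian_transitive_astab1 cards1 muln1.
by rewrite -orbitT cardsT.
Qed.

End AbelianTransitive.

Section PsiGroup.

Variables (S : finType) (op : S -> S -> S) (H : left_bij op).

Lemma psiE s t : psi H s t = op s t.
Proof. by rewrite permE. Qed.

Lemma mem_psi_group s : psi H s \in psi_group H.
Proof. by apply: mem_gen; apply: imset_f. Qed.

Lemma psi_group_orbit_op (s x z : S) :
  (op s z \in orbit 'P (psi_group H) x) = (z \in orbit 'P (psi_group H) x).
Proof. by rewrite -psiE -apermE orbit_actr ?mem_psi_group. Qed.

Lemma indecomposable_transitive (x : S) :
  indecomposable op -> [transitive psi_group H, on [set: S] | 'P].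
Proof.
move=> indS; apply/imsetP; exists x; rewrite ?inE //.
apply/esym/setP => y; rewrite inE; apply/negPn/negP => yNorb; apply: indS.
exists (orbit 'P (psi_group H) x); split.
  by apply/set0Pn; exists x; apply: orbit_refl.
split; first by apply/set0Pn; exists y; rewrite inE.
by split=> s z; rewrite ?inE psi_group_orbit_op.
Qed.

End PsiGroup.

Theorem mainTheorem8 (S : finType) (op : S -> S -> S)
  (Hcs : cycle_set op) (Hne : 0 < #|S|) (Hind : indecomposable op) :
  abelian (psi_group (proj1 Hcs)) ->
  #|S| = #|psi_group (proj1 Hcs)|.
Proof.
move=> cGG; have /card_gt0P[x _] := Hne.
by rewrite card_abelian_transitive // (indecomposable_transitive _ x).
Qed.
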